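(* Let $(\alpha,\beta)\in\mathcal{A}(K,L,T)$, let $p$ (resp. $q$) be the vector of entries of $\alpha$ (resp. $\beta$) sorted increasingly, and let $a=\min\operatorname{Set}(\alpha)$, $A=\max\operatorname{Set}(\alpha)$, $b=\min\operatorname{Set}(\beta)$, $B=\max\operatorname{Set}(\beta)$. (1) If $1\le i<K+T$ and $p_i+B<(p_{i+1}-1)+b$, then $(\alpha',\beta)\in\mathcal{A}(K,L,T)$ and $\operatorname{N}(\alpha',\beta)=\operatorname{N}(\alpha,\beta)$, where $\alpha'_j=\alpha_j$ if $\alpha_j\le p_i$ and $\alpha'_j=\alpha_j-1$ otherwise (the splitting of $\alpha'$ into prefix of length $K$ and suffix of length $T$ being the same as for $\alpha$). (2) If $1\le i<L+T$ and $q_i+A<(q_{i+1}-1)+a$, then $(\alpha,\beta')\in\mathcal{A}(K,L,T)$ and $\operatorname{N}(\alpha,\beta')=\operatorname{N}(\alpha,\beta)$, where $\beta'_j=\beta_j$ if $\beta_j\le q_i$ and $\beta'_j=\beta_j-1$ otherwise.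
   Context: A degree table with parameters $K,L,T$ is a tuple $(\alpha_{\mathrm p},\alpha_{\mathrm s},\beta_{\mathrm p},\beta_{\mathrm s})$ of nonnegative integer vectors of lengths $K,T,L,T$ such that, with $\alpha=(\alpha_{\mathrm p}\mid\alpha_{\mathrm s})$ and $\beta=(\beta_{\mathrm p}\mid\beta_{\mathrm s})$: (i) entries of $\alpha$ are distinct; (ii) entries of $\beta$ are distinct; (iii) for every integer $n\in\operatorname{Set}(\alpha_{\mathrm p})+\operatorname{Set}(\beta_{\mathrm p})$ there is a unique $i\in\operatorname{Set}(\alpha)$ and unique $j\in\operatorname{Set}(\beta)$ with $n=i+j$. $\operatorname{Set}(v)$ is the set of entries of $v$, $A+B=\{a+b\}$, $\mathcal{A}(K,L,T)$ is the set of degree tables and $\operatorname{N}(\alpha,\beta)=|\operatorname{Set}(\alpha)+\operatorname{Set}(\beta)|$. *)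

From mathcomp Require Import all_boot.
Set Implicit Arguments. Unset Strict Implicit. Unset Printing Implicit Defensive.

(* Vectors of nonnegative integers are tuples of nat; Set(v) is the seq of
   entries (membership via \in). *)

Definition sumset (A B : seq nat) : seq nat := [seq a + b | a <- A, b <- B].

Definition Nsum (alpha beta : seq nat) : nat := size (undup (sumset alpha beta)).

(* Degree table condition. alpha = ap ++ as_, beta = bp ++ bs. *)
Definition degree_table (K L T : nat) (ap : K.-tuple nat) (as_ : T.-tuple nat)
    (bp : L.-tuple nat) (bs : T.-tuple nat) : Prop :=
  [/\ uniq (ap ++ as_),
      uniq (bp ++ bs) &
      forall n, n \in sumset ap bp ->
        exists! ij : nat * nat,
          [/\ ij.1 \in (ap ++ as_ : seq nat), ij.2 \in (bp ++ bs : seq nat)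
            & n = ij.1 + ij.2] ].

(* minimum / maximum of the set of entries (default 0 for the empty seq) *)
Definition minseq (s : seq nat) : nat := foldr minn (head 0 s) s.
Definition maxseq (s : seq nat) : nat := foldr maxn 0 s.

(* p_i (1-based) : i-th smallest entry of s *)
Definition sorted_nth (s : seq nat) (i : nat) : nat := nth 0 (sort leq s) i.-1.

Definition shift_down (c x : nat) : nat := if x <= c then x else x - 1.

From mathcomp Require Import all_boot zify.

Set Implicit Arguments.
Unset Strict Implicit.
Unset Printing Implicit Defensive.

(* Every entry x of alpha is <= p_i or >= p_(i+1), and the gap hypothesis
   puts the sums x + y of the first kind at most p_i + B and those of the
   second kind at least p_i + B + 2.  Lowering the entries above p_i by one
   thus lowers exactly the sums above p_i + B by one:
   x' + y = shift_down (p_i + B) (x + y), an injective map on the sums.  So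
   unique representations survive and the number of distinct sums is
   unchanged.  Part (2) is part (1) with alpha and beta exchanged. *)

Definition unique_rep (A B : seq nat) (n : nat) : Prop :=
  exists! ij : nat * nat, [/\ ij.1 \in A, ij.2 \in B & n = ij.1 + ij.2].

Lemma minseq_le s y : y \in s -> minseq s <= y.
Proof.
rewrite /minseq; elim: s (head 0 s) => [//|x s IHs] d /=.
by rewrite in_cons geq_min => /orP[/eqP->|/IHs->]; rewrite ?leqnn ?orbT.
Qed.

Lemma maxseq_ge s y : y \in s -> y <= maxseq s.
Proof.
rewrite /maxseq; elim: s => [//|x s IHs] /=.
by rewrite in_cons leq_max => /orP[/eqP->|/IHs->]; rewrite ?leqnn ?orbT.
Qed.

Lemma minseq_le_maxseq s : minseq s <= maxseq s.
Proof.
case: s => [//|x s]; have x_in := mem_head x s.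
exact: leq_trans (minseq_le x_in) (maxseq_ge x_in).
Qed.

Lemma sorted_nth_dichotomy (s : seq nat) i x : 1 <= i < size s -> x \in s ->
  x <= sorted_nth s i \/ sorted_nth s i.+1 <= x.
Proof.
move=> /andP[i_pos i_lt]; rewrite -(mem_sort leq) => /(nthP 0)[k].
rewrite size_sort => k_lt <-.
have le_nth := sorted_leq_nth leq_trans leqnn 0 (sort_sorted leq_total s).
rewrite /sorted_nth /=; have [k_le|k_gt] := leqP k i.-1.
  by left; apply: le_nth; rewrite ?inE ?size_sort //; lia.
by right; apply: le_nth; rewrite ?inE ?size_sort //; lia.
Qed.

Lemma shift_down_inj c : {in predC1 c.+1 &, injective (shift_down c)}.
Proof.
move=> x y; rewrite !inE /shift_down => x_neq y_neq.
by case: (leqP x c) => x_c; case: (leqP y c) => y_c; lia.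
Qed.

Lemma size_undup_map_in (s : seq nat) (h : nat -> nat) : {in s &, injective h} ->
  size (undup (map h s)) = size (undup s).
Proof.
move=> h_inj; rewrite -(size_map h (undup s)); apply/perm_size/uniq_perm.
- exact: undup_uniq.
- by rewrite map_inj_in_uniq ?undup_uniq // => x y; rewrite !mem_undup; apply: h_inj.
- by move=> z; rewrite mem_undup; apply/mapP/mapP => -[x xs ->]; exists x; rewrite ?mem_undup in xs *.
Qed.

Lemma sumsetC (A B : seq nat) : sumset A B =i sumset B A.
Proof.
move=> z; apply/allpairsP/allpairsP => -[[x y] [/= xA yB ->]];
  by exists (y, x); rewrite /= addnC.
Qed.

Lemma NsumC (A B : seq nat) : Nsum A B = Nsum B A.
Proof.
by apply/perm_size/uniq_perm; rewrite ?undup_uniq // => z; rewrite !mem_undup sumsetC.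
Qed.

Lemma unique_repC (A B : seq nat) n : unique_rep A B n -> unique_rep B A n.
Proof.
move=> [[x y] [[/= xA yB ->] uniq_xy]]; exists (y, x); split; first by split; rewrite // addnC.
move=> [u v] [/= uB vA E].
by have [-> ->] : (x, y) = (v, u) by apply: uniq_xy; split; rewrite //= E addnC.
Qed.

Lemma degree_tableC K L T (ap : K.-tuple nat) (as_ : T.-tuple nat)
    (bp : L.-tuple nat) (bs : T.-tuple nat) :
  degree_table ap as_ bp bs -> degree_table bp bs ap as_.
Proof.
by case=> ua ub rep; split=> // n; rewrite sumsetC => /rep; apply: unique_repC.
Qed.

Section ShiftedSummand.

Variables (al be : seq nat) (f h : nat -> nat).
Hypothesis f_addr : {in al & be, forall x y, f x + y = h (x + y)}.
Hypothesis h_inj : {in sumset al be &, injective h}.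

Lemma sumset_mapl : sumset (map f al) be = map h (sumset al be).
Proof. by rewrite /sumset allpairs_mapl map_allpairs; apply/eq_in_allpairs. Qed.

Lemma Nsum_mapl : Nsum (map f al) be = Nsum al be.
Proof. by rewrite /Nsum sumset_mapl size_undup_map_in. Qed.

Lemma unique_rep_mapl (ap bp : seq nat) :
  {subset ap <= al} -> {subset bp <= be} ->
  {in sumset ap bp, forall n, unique_rep al be n} ->
  {in sumset (map f ap) bp, forall n, unique_rep (map f al) be n}.
Proof.
move=> sub_a sub_b rep _ /allpairsP[[_ y] [/= /mapP[x xap ->] ybp ->]].
have [xal ybe] := (sub_a x xap, sub_b y ybp).
exists (f x, y); split; first by split; rewrite /= ?map_f.
move=> [_ v] [/= /mapP[x' x'al ->] vbe E].
have sum_eq : x' + v = x + y by apply: h_inj; rewrite ?allpairs_f // -!f_addr.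
have [[x0 y0] [_ uniq0]] := rep (x + y) (allpairs_f _ xap ybp).
have := uniq0 (x', v) (And3 x'al vbe (esym sum_eq)).
by rewrite (uniq0 (x, y) (And3 xal ybe erefl)) => -[-> ->].
Qed.

End ShiftedSummand.

Section Gap.

Variables (al be : seq nat) (i : nat).
Hypothesis i_range : 1 <= i < size al.
Hypothesis gap : sorted_nth al i + maxseq be < sorted_nth al i.+1 - 1 + minseq be.

Local Notation c := (sorted_nth al i).

Lemma gap_dichotomy x y : x \in al -> y \in be ->
  x <= c /\ x + y <= c + maxseq be \/ c.+2 <= x /\ (c + maxseq be).+2 <= x + y.
Proof.
move=> xal ybe; have b_le_B := minseq_le_maxseq be.
have [b_le_y y_le_B] := (minseq_le ybe, maxseq_ge ybe).
by case: (sorted_nth_dichotomy i_range xal) => x_bd; lia.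
Qed.

Lemma gap_shift_down_addr :
  {in al & be, forall x y, shift_down c x + y = shift_down (c + maxseq be) (x + y)}.
Proof.
move=> x y xal ybe; have := gap_dichotomy xal ybe; rewrite /shift_down.
by case: (leqP x c) => x_c; case: (leqP (x + y) (c + maxseq be)) => sum_cB; lia.
Qed.

Lemma gap_shift_down_inj : {in al &, injective (shift_down c)}.
Proof.
apply: sub_in2 (@shift_down_inj c) => x xal; rewrite inE.
have b_le_B := minseq_le_maxseq be.
by case: (sorted_nth_dichotomy i_range xal) => x_bd; lia.
Qed.

Lemma gap_sumset_inj : {in sumset al be &, injective (shift_down (c + maxseq be))}.
Proof.
apply: sub_in2 (@shift_down_inj _) => _ /allpairsP[[x y] [/= xal ybe ->]].
by rewrite inE; case: (gap_dichotomy xal ybe) => -[_ sum_bd]; lia.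
Qed.

End Gap.

Lemma degree_table_shift_down K L T (ap : K.-tuple nat) (as_ : T.-tuple nat)
    (bp : L.-tuple nat) (bs : T.-tuple nat) i :
  degree_table ap as_ bp bs -> 1 <= i < K + T ->
  let alpha := (ap ++ as_ : seq nat) in let beta := (bp ++ bs : seq nat) in
  sorted_nth alpha i + maxseq beta < sorted_nth alpha i.+1 - 1 + minseq beta ->
  let f := shift_down (sorted_nth alpha i) in
  degree_table (map_tuple f ap) (map_tuple f as_) bp bs /\
  Nsum (map f alpha) beta = Nsum alpha beta.
Proof.
case=> ua ub rep i_range alpha beta gap f.
have i_range' : 1 <= i < size alpha by rewrite size_cat !size_tuple.
have f_addr := gap_shift_down_addr i_range' gap.
have h_inj := gap_sumset_inj i_range' gap.
split; last exact: Nsum_mapl f_addr h_inj.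
split=> //=; rewrite -map_cat.
  by rewrite map_inj_in_uniq //; apply: gap_shift_down_inj i_range' gap.
by apply: unique_rep_mapl f_addr h_inj _ _ _ _ rep => x; rewrite mem_cat => ->.
Qed.

Theorem lemma4 (K L T : nat) (ap : K.-tuple nat) (as_ : T.-tuple nat)
    (bp : L.-tuple nat) (bs : T.-tuple nat) :
  degree_table ap as_ bp bs ->
  let alpha := (ap ++ as_ : seq nat) in
  let beta := (bp ++ bs : seq nat) in
  let a := minseq alpha in let A := maxseq alpha in
  let b := minseq beta in let B := maxseq beta in
  (forall i, 1 <= i < K + T ->
     sorted_nth alpha i + B < (sorted_nth alpha i.+1 - 1) + b ->
     let f := shift_down (sorted_nth alpha i) in
     degree_table (map_tuple f ap) (map_tuple f as_) bp bs /\
     Nsum (map f alpha) beta = Nsum alpha beta) /\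
  (forall i, 1 <= i < L + T ->
     sorted_nth beta i + A < (sorted_nth beta i.+1 - 1) + a ->
     let g := shift_down (sorted_nth beta i) in
     degree_table ap as_ (map_tuple g bp) (map_tuple g bs) /\
     Nsum alpha (map g beta) = Nsum alpha beta).
Proof.
move=> table alpha beta a A b B; split=> i i_range gap.
  exact: degree_table_shift_down.
have [table' N_eq] := degree_table_shift_down (degree_tableC table) i_range gap.
by split; [apply: degree_tableC | rewrite NsumC N_eq NsumC].
Qed.
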